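(* For all $x\ge 1$ and $n\ge x$, the $(x,x)$ edge-removal process on $n$ vertices always results in an $(x,x)$ task-dependency graph.
   Context: A task-dependency graph is a finite directed acyclic graph (no loops, no multiple edges). A vertex is initial if it has in-degree $0$ and terminal if it has out-degree $0$ (an isolated vertex is both). An $(x,y)$ task-dependency graph has exactly $x$ initial and exactly $y$ terminal vertices. The $(x,y)$ edge-removal process on $n$ vertices: start with the maximally connected task-dependency graph on vertex set $\{1,\dots,n\}$, having all edges $(a,b)$ with $a<b$. Edges are removed uniformly at random, one at a time; whenever a removal would cause the graph to have more than $x$ initial vertices or more than $y$ terminal vertices, the removal is cancelled. The process terminates when no further edge can be removed, and its result is the final graph. *)

From mathcomp Require Import all_boot.
Set Implicit Arguments. Unset Strict Implicit. Unset Printing Implicit Defensive.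

(* A graph on vertex set {1..n} (encoded as 'I_n, order preserved) is a set of
   directed edges (a,b). *)
Notation graph n := {set 'I_n * 'I_n}.

Definition complete_tdg (n : nat) : graph n := [set e : 'I_n * 'I_n | (e.1 < e.2)%N].

Definition initialb n (G : graph n) (v : 'I_n) : bool := [forall u, (u, v) \notin G].
Definition terminalb n (G : graph n) (v : 'I_n) : bool := [forall u, (v, u) \notin G].
Definition num_initial n (G : graph n) : nat := #|[set v | initialb G v]|.
Definition num_terminal n (G : graph n) : nat := #|[set v | terminalb G v]|.

(* A task-dependency graph on 'I_n: a DAG without loops/multi-edges.  Here we
   use the vertex order: every edge goes from a smaller to a larger vertex,
   which is exactly the class of subgraphs of the complete one (all graphs
   arising in the process are of this form). *)
Definition is_tdg n (G : graph n) : bool := G \subset complete_tdg n.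

Definition is_xy_tdg (x y : nat) n (G : graph n) : bool :=
  [&& is_tdg G, num_initial G == x & num_terminal G == y].

Definition removal_ok (x y : nat) n (G : graph n) (e : 'I_n * 'I_n) : bool :=
  [&& e \in G, (num_initial (G :\ e) <= x)%N & (num_terminal (G :\ e) <= y)%N].

Definition removal_step (x y : nat) n : rel (graph n) :=
  fun G H => [exists e, removal_ok x y G e && (H == G :\ e)].

Definition terminated (x y : nat) n (G : graph n) : bool :=
  [forall e, ~~ removal_ok x y G e].

Definition possible_result (x y : nat) n (G : graph n) : Prop :=
  connect (@removal_step x y n) (complete_tdg n) G /\ terminated x y G.

From mathcomp Require Import all_boot.
Set Implicit Arguments. Unset Strict Implicit. Unset Printing Implicit Defensive.

(* Removing an edge (a, b) can only make a terminal and b initial, so along the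
   process both counts stay at most x.  Suppose the process stops with fewer
   than x initial vertices.  Then every removal is cancelled by the terminal
   count, which forces exactly x terminal vertices and makes every edge the
   only edge leaving its source.  So there are as many edges as non-terminal
   vertices, and at least as many edges as non-initial vertices (each has an
   incoming edge); hence there are at least x initial vertices, a
   contradiction.  Reversing all edges gives the terminal count. *)

Definition initials n (G : graph n) : {set 'I_n} := [set v | initialb G v].
Definition terminals n (G : graph n) : {set 'I_n} := [set v | terminalb G v].

(* Reversed graphs leave the class [is_tdg]; this is harmless, as the
   termination argument never uses [is_tdg]. *)
Definition graph_rev n (G : graph n) : graph n := swap_pair @^-1: G.

Section Reversal.

Variable n : nat.
Implicit Types (G : graph n) (e : 'I_n * 'I_n).

Lemma initials_rev G : initials (graph_rev G) = terminals G.
Proof. by apply/setP => v; rewrite !inE; apply: eq_forallb => u; rewrite inE. Qed.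

Lemma terminals_rev G : terminals (graph_rev G) = initials G.
Proof. by apply/setP => v; rewrite !inE; apply: eq_forallb => u; rewrite inE. Qed.

Lemma card_graph_rev G : #|graph_rev G| = #|G|.
Proof. exact/card_preimset/(can_inj swap_pairK). Qed.

Lemma graph_revD1 G e : graph_rev (G :\ e) = graph_rev G :\ swap_pair e.
Proof.
apply/setP => f; rewrite !inE.
by rewrite -(inj_eq (can_inj swap_pairK)) swap_pairK.
Qed.

Lemma removal_ok_rev x y G e :
  removal_ok y x (graph_rev G) e = removal_ok x y G (swap_pair e).
Proof.
rewrite /removal_ok inE.
have -> : graph_rev G :\ e = graph_rev (G :\ swap_pair e).
  by rewrite graph_revD1 swap_pairK.
rewrite /num_initial /num_terminal -!/(initials _) -!/(terminals _).
by rewrite initials_rev terminals_rev; congr (_ && _); rewrite andbC.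
Qed.

Lemma terminated_rev x y G : terminated x y G -> terminated y x (graph_rev G).
Proof. by move=> /forallP term; apply/forallP => e; rewrite removal_ok_rev. Qed.

End Reversal.

Section EdgeCounting.

Variable n : nat.
Implicit Types (G : graph n) (e : 'I_n * 'I_n).

Lemma terminalsD1 G e : terminals (G :\ e) \subset e.1 |: terminals G.
Proof.
apply/subsetP => v; rewrite !inE => /forallP tv; case: eqP => //= /eqP ve.
apply/forallP => u; have := tv u; rewrite !inE negb_and negbK.
by case: eqP => [vue|] //; rewrite -vue eqxx in ve.
Qed.

Lemma initialsD1 G e : initials (G :\ e) \subset e.2 |: initials G.
Proof. by rewrite -!terminals_rev graph_revD1; apply: terminalsD1. Qed.

Lemma card_terminalsD1 G e : num_terminal (G :\ e) <= (num_terminal G).+1.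
Proof.
apply: leq_trans (subset_leq_card (terminalsD1 G e)) _.
by rewrite cardsU1; case: (_ \notin _).
Qed.

Lemma card_initialsD1 G e : num_initial (G :\ e) <= (num_initial G).+1.
Proof.
apply: leq_trans (subset_leq_card (initialsD1 G e)) _.
by rewrite cardsU1; case: (_ \notin _).
Qed.

Lemma terminalsD1_sub G e :
  e.1 \notin terminals (G :\ e) -> terminals (G :\ e) \subset terminals G.
Proof.
move=> ne; apply/subsetP => v vT; have := subsetP (terminalsD1 G e) v vT.
by case/setU1P => // ve; rewrite -ve vT in ne.
Qed.

Lemma card_nonterminals G : #|~: terminals G| <= #|G|.
Proof.
apply: leq_trans (leq_imset_card fst G); apply/subset_leq_card/subsetP => v.
rewrite !inE => /forallPn [u]; rewrite negbK => vuG.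
by apply/imsetP; exists (v, u).
Qed.

Lemma card_noninitials G : #|~: initials G| <= #|G|.
Proof. by rewrite -terminals_rev -(card_graph_rev G) card_nonterminals. Qed.

Lemma card_sole_out_edges G :
  {in G, forall e, e.1 \in terminals (G :\ e)} -> #|G| <= #|~: terminals G|.
Proof.
move=> sole; have fst_inj : {in G &, injective fst}.
  move=> [a b] [a' b'] /sole abT a'b'G /= aa'; subst a'.
  move: abT; rewrite inE => /forallP /(_ b'); rewrite !inE a'b'G andbT negbK.
  by move/eqP => ->.
rewrite -(card_in_imset fst_inj); apply/subset_leq_card/subsetP => v.
case/imsetP => -[a b] abG ->; rewrite !inE.
by apply/negP => /forallP /(_ b); rewrite abG.
Qed.

Lemma card_terminals_le_initials G :
  {in G, forall e, e.1 \in terminals (G :\ e)} -> num_terminal G <= num_initial G.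
Proof.
move=> /card_sole_out_edges sole; have le := leq_trans (card_noninitials G) sole.
rewrite -(leq_add2r #|~: terminals G|) [X in X <= _]cardsC.
by rewrite -(cardsC (initials G)) leq_add2l.
Qed.

End EdgeCounting.

Section Termination.

Variables (x y n : nat).
Implicit Types (G : graph n) (e : 'I_n * 'I_n).

Lemma num_initial_set0 : num_initial (set0 : graph n) = n.
Proof.
rewrite /num_initial -[RHS]card_ord -cardsT; congr #|pred_of_set _|.
by apply/setP => v; rewrite !inE; apply/forallP => u; rewrite inE.
Qed.

Lemma terminated_removal_blocked G e : terminated x y G ->
  num_initial G < x -> e \in G -> y < num_terminal (G :\ e).
Proof.
move=> /forallP /(_ e) + init_lt eG; rewrite /removal_ok eG ltnNge.
by rewrite (leq_trans (card_initialsD1 G e) init_lt).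
Qed.

Lemma terminated_initials G : y <= n -> terminated x y G ->
  num_initial G < x -> num_terminal G <= y -> y <= num_initial G.
Proof.
move=> yn term init_lt term_le.
have blocked := terminated_removal_blocked term init_lt.
have [->|[e eG]] := set_0Vmem G; first by rewrite num_initial_set0.
have sole : {in G, forall e, e.1 \in terminals (G :\ e)}.
  move=> f fG; apply/contraT => /terminalsD1_sub /subset_leq_card le.
  by have := leq_trans (blocked f fG) le; rewrite ltnNge term_le.
apply: leq_trans (card_terminals_le_initials sole).
by rewrite -ltnS (leq_trans (blocked e eG) (card_terminalsD1 G e)).
Qed.

End Termination.

Lemma terminated_terminals x y n (G : graph n) : x <= n -> terminated x y G ->
  num_terminal G < y -> num_initial G <= x -> x <= num_terminal G.
Proof.
move=> xn /terminated_rev term; rewrite /num_initial /num_terminal.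
rewrite -!/(initials G) -!/(terminals G).
rewrite -[terminals G]initials_rev -[initials G]terminals_rev.
exact: terminated_initials term.
Qed.

Lemma num_initial_complete n : num_initial (complete_tdg n) <= 1.
Proof.
apply/card_le1_eqP => u v; rewrite !inE => /forallP iu /forallP iv.
have := iu v; have := iv u; rewrite !inE /= -!leqNgt => vu uv.
by apply/val_inj/eqP; rewrite eqn_leq uv vu.
Qed.

Lemma num_terminal_complete n : num_terminal (complete_tdg n) <= 1.
Proof.
apply/card_le1_eqP => u v; rewrite !inE => /forallP tu /forallP tv.
have := tu v; have := tv u; rewrite !inE /= -!leqNgt => vu uv.
by apply/val_inj/eqP; rewrite eqn_leq uv vu.
Qed.

Definition within_bounds x y n (G : graph n) : bool :=
  [&& is_tdg G, num_initial G <= x & num_terminal G <= y].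

Lemma within_bounds_reachable x y n (G : graph n) : 0 < x -> 0 < y ->
  connect (@removal_step x y n) (complete_tdg n) G -> within_bounds x y G.
Proof.
move=> x_gt0 y_gt0 /connectP [p + ->].
have : within_bounds x y (complete_tdg n).
  by rewrite /within_bounds /is_tdg subxx (leq_trans (num_initial_complete n))
    ?(leq_trans (num_terminal_complete n)).
elim: p (complete_tdg n) => [//|H p IHp] F bF /= /andP [/existsP [e] step pH].
apply: IHp pH; case/andP: step => /and3P [_ init_le term_le] /eqP ->.
case/and3P: bF => tdgF _ _.
by rewrite /within_bounds /is_tdg init_le term_le (subset_trans (subD1set F e)).
Qed.

Theorem mainTheorem4 (x n : nat) :
  (1 <= x)%N -> (x <= n)%N ->
  forall G : {set 'I_n * 'I_n}, possible_result x x G -> is_xy_tdg x x G.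
Proof.
move=> x_gt0 xn G [reach term].
have /and3P [tdgG init_le term_le] := within_bounds_reachable x_gt0 x_gt0 reach.
rewrite /is_xy_tdg tdgG !eqn_leq init_le term_le /=.
apply/andP; split.
- case: (leqP x (num_initial G)) => // init_lt.
  by have := terminated_initials xn term init_lt term_le; rewrite leqNgt init_lt.
- case: (leqP x (num_terminal G)) => // term_lt.
  by have := terminated_terminals xn term term_lt init_le; rewrite leqNgt term_lt.
Qed.
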